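(* If $S$ is a nondegenerate $n$-dimensional simplex with $S\subset B_n$, then $\xi(B_n;S)\ge n$, and $\xi(B_n;S)=n$ holds if and only if $S$ is a regular simplex inscribed into $B_n$. Consequently $\xi_n(B_n)=n$.
   Context: $B_n$ is the closed unit Euclidean ball in $\mathbb R^n$ centered at $0$. $\xi(B_n;S)$ is the minimal $\sigma\ge1$ with $B_n\subset\sigma S$, where $\sigma S$ is the homothetic image of $S$ with center at its center of gravity and ratio $\sigma$. $\xi_n(B_n)$ is the minimum of $\xi(B_n;S)$ over all nondegenerate $n$-dimensional simplices $S\subset B_n$. A simplex is inscribed into $B_n$ if all its vertices lie on the unit sphere. *)

From HB Require Import structures.
From mathcomp Require Import all_boot all_order all_algebra.
From mathcomp Require Import boolp classical_sets reals.
Set Implicit Arguments. Unset Strict Implicit. Unset Printing Implicit Defensive.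
Import Order.TTheory GRing.Theory Num.Theory.
Local Open Scope ring_scope.
Local Open Scope classical_set_scope.

Definition enorm (R : realType) (n : nat) (x : 'rV[R]_n) : R :=
  Num.sqrt (\sum_(i < n) (x ord0 i) ^+ 2).

Definition unit_ball (R : realType) (n : nat) : set 'rV[R]_n :=
  [set x | enorm x <= 1].

Definition simplex_hull (R : realType) (n : nat) (v : 'I_n.+1 -> 'rV[R]_n) : set 'rV[R]_n :=
  [set x | exists lam : 'I_n.+1 -> R,
     (forall i, 0 <= lam i) /\ \sum_i lam i = 1 /\ x = \sum_i lam i *: v i].

Definition nondeg_simplex (R : realType) (n : nat) (v : 'I_n.+1 -> 'rV[R]_n) : Prop :=
  \det (\matrix_(i < n) (v (lift ord0 i) - v ord0)) != 0.

Definition centroid (R : realType) (n : nat) (v : 'I_n.+1 -> 'rV[R]_n) : 'rV[R]_n :=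
  (n.+1%:R)^-1 *: \sum_i v i.

Definition homothetic (R : realType) (n : nat) (sigma : R) (v : 'I_n.+1 -> 'rV[R]_n)
  : set 'rV[R]_n :=
  [set centroid v + sigma *: (x - centroid v) | x in simplex_hull v].

Definition xi (R : realType) (n : nat) (v : 'I_n.+1 -> 'rV[R]_n) : R :=
  inf [set sigma : R | 1 <= sigma /\ @unit_ball R n `<=` homothetic sigma v].

Definition xi_n (R : realType) (n : nat) : R :=
  inf [set xi v | v in [set v : 'I_n.+1 -> 'rV[R]_n |
                          nondeg_simplex v /\ simplex_hull v `<=` @unit_ball R n]].

Definition regular_simplex (R : realType) (n : nat) (v : 'I_n.+1 -> 'rV[R]_n) : Prop :=
  forall i j k l, i != j -> k != l -> enorm (v i - v j) = enorm (v k - v l).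

Definition inscribed (R : realType) (n : nat) (v : 'I_n.+1 -> 'rV[R]_n) : Prop :=
  forall i, enorm (v i) = 1.

From HB Require Import structures.
From mathcomp Require Import all_boot all_order all_algebra.
From mathcomp Require Import boolp classical_sets reals.
From mathcomp Require Import ring lra.
Import Order.TTheory GRing.Theory Num.Theory.
Local Open Scope ring_scope.
Local Open Scope classical_set_scope.
Set Implicit Arguments. Unset Strict Implicit. Unset Printing Implicit Defensive.

(* For a nondegenerate simplex S with vertices v 0, ..., v n let
   bary j x = <grad j, x> + bary j 0 be its barycentric coordinates.  The
   homothetic copy sigma S is {x | bary j x >= (1 - sigma)/(n+1) for all j},
   and the minimum of bary j over B_n is bary j 0 - |grad j|; hence
   B_n lies in sigma S iff sigma >= 1 + (n+1)(|grad j| - bary j 0) for all j.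
   Averaging over j gives xi(B_n; S) >= sum_j |grad j|.  If S lies in B_n then
   the vertex v j is in the ball, and Cauchy-Schwarz gives
   |grad j| >= <grad j, v j> = 1 - bary j 0, whose sum over j is n.
   If xi = n all these inequalities are equalities; this forces |v j| = 1 and
   <v i, v j> = -1/n for i <> j, i.e. S is regular and inscribed.
   Conversely for a regular inscribed simplex (n+1) bary i y = n <y, v i> + 1,
   which shows B_n in n S.  An explicit regular simplex inscribed into B_n
   then shows that the infimum xi_n(B_n) is attained and equals n. *)

Lemma sum_mul_delta (R : pzSemiRingType) (I : finType) (f : I -> R) j :
  \sum_i f i * (i == j)%:R = f j.
Proof.
by rewrite (bigD1 j) //= eqxx mulr1 big1 ?addr0 // => i /negbTE ->; rewrite mulr0.
Qed.

Lemma sum_delta_affine (R : comPzRingType) m (k j : 'I_m) (al be ga ep : R) :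
  \sum_(l < m) (al * (l == k)%:R + be) * (ga * (l == j)%:R + ep) =
  al * ga * (k == j)%:R + al * ep + be * ga + m%:R * be * ep.
Proof.
rewrite (eq_bigr (fun l => (al * ga * (l == j)%:R + al * ep) * (l == k)%:R
   + (be * ga * (l == j)%:R + be * ep))) => [|l _]; last by ring.
rewrite !big_split /= sum_mul_delta (sum_mul_delta (fun=> be * ga)).
by rewrite sumr_const card_ord -(mulr_natl (be * ep)) !addrA mulrA.
Qed.

Lemma ler_sum_eq (R : numDomainType) (I : finType) (p q : I -> R) :
  (forall i, p i <= q i) -> \sum_i p i = \sum_i q i -> forall i, p i = q i.
Proof.
move=> pq /esym/eqP; rewrite -subr_eq0 -sumrB => /eqP sum0 i.
have qp0 k : true -> 0 <= q k - p k by rewrite subr_ge0.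
by apply/eqP; rewrite eq_sym -subr_eq0; apply/eqP; exact: (psumr_eq0P qp0 sum0).
Qed.
Section InnerProduct.
Variables (R : realType) (n : nat).
Implicit Types (x y z g u : 'rV[R]_n).

Definition dot x y : R := \sum_i x ord0 i * y ord0 i.

Lemma dotC x y : dot x y = dot y x.
Proof. by apply: eq_bigr => i _; rewrite mulrC. Qed.

Lemma dotDl x y z : dot (x + y) z = dot x z + dot y z.
Proof. by rewrite /dot -big_split; apply: eq_bigr => i _; rewrite !mxE mulrDl. Qed.

Lemma dotZl a x z : dot (a *: x) z = a * dot x z.
Proof. by rewrite /dot mulr_sumr; apply: eq_bigr => i _; rewrite !mxE mulrA. Qed.

Lemma dotNl x z : dot (- x) z = - dot x z.
Proof. by rewrite -scaleN1r dotZl mulN1r. Qed.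

Lemma dotBl x y z : dot (x - y) z = dot x z - dot y z.
Proof. by rewrite dotDl dotNl. Qed.

Lemma dot0l z : dot 0 z = 0.
Proof. by rewrite -(scale0r 0) dotZl mul0r. Qed.

Lemma dot_suml (I : finType) (f : I -> 'rV[R]_n) z :
  dot (\sum_i f i) z = \sum_i dot (f i) z.
Proof.
by elim/big_rec2: _ => [|i y1 y2 _ <-]; rewrite ?dot0l ?dotDl.
Qed.

Lemma dotDr x y z : dot z (x + y) = dot z x + dot z y.
Proof. by rewrite dotC dotDl !(dotC z). Qed.

Lemma dotZr a x z : dot z (a *: x) = a * dot z x.
Proof. by rewrite dotC dotZl dotC. Qed.

Lemma dotNr x z : dot z (- x) = - dot z x.
Proof. by rewrite dotC dotNl dotC. Qed.

Lemma dotBr x y z : dot z (x - y) = dot z x - dot z y.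
Proof. by rewrite dotDr dotNr. Qed.

Lemma dot0r z : dot z 0 = 0.
Proof. by rewrite dotC dot0l. Qed.

Lemma dot_sumr (I : finType) (f : I -> 'rV[R]_n) z :
  dot z (\sum_i f i) = \sum_i dot z (f i).
Proof. by rewrite dotC dot_suml; apply: eq_bigr => i _; rewrite dotC. Qed.

Lemma dot_ge0 x : 0 <= dot x x.
Proof. by apply: sumr_ge0 => i _; rewrite -expr2 sqr_ge0. Qed.

Lemma dot_eq0 x : dot x x = 0 -> x = 0.
Proof.
move=> /eqP; rewrite psumr_eq0 => [/allP x0|i _]; last by rewrite -expr2 sqr_ge0.
apply/rowP => i; rewrite mxE.
by have := x0 i (mem_index_enum _); rewrite /= -expr2 sqrf_eq0 => /eqP.
Qed.

Lemma enormE x : enorm x = Num.sqrt (dot x x).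
Proof. by rewrite /enorm /dot; congr Num.sqrt; apply: eq_bigr => i _; rewrite expr2. Qed.

Lemma enorm2 x : enorm x ^+ 2 = dot x x.
Proof. by rewrite enormE sqr_sqrtr // dot_ge0. Qed.

Lemma enorm_ge0 x : 0 <= enorm x.
Proof. by rewrite enormE sqrtr_ge0. Qed.

Lemma enormN x : enorm (- x) = enorm x.
Proof. by rewrite !enormE dotNl dotNr opprK. Qed.

Lemma unit_ballE x : unit_ball x <-> dot x x <= 1.
Proof. by rewrite /unit_ball /= -enorm2 expr_le1 ?enorm_ge0. Qed.

Lemma unit_ballN x : unit_ball x -> unit_ball (- x).
Proof. by rewrite /unit_ball /= enormN. Qed.

(* Expanding |N u - g|^2 with N = |g|: the identity behind Cauchy-Schwarz. *)
Lemma dot_scale_norm_sub g u :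
  dot (enorm g *: u - g) (enorm g *: u - g) =
  enorm g ^+ 2 * dot u u - 2 * enorm g * dot g u + enorm g ^+ 2.
Proof. by rewrite !(dotBl, dotBr, dotZl, dotZr) (dotC u g) -(enorm2 g); ring. Qed.

Lemma dot_le_enorm g u : unit_ball u -> dot g u <= enorm g.
Proof.
move=> /unit_ballE u1; have := dot_ge0 (enorm g *: u - g).
rewrite dot_scale_norm_sub.
have [g0|gn0] := eqVneq (enorm g) 0.
  have /dot_eq0 -> : dot g g = 0 by rewrite -enorm2 g0 expr0n.
  by rewrite dot0l enorm_ge0.
have gp : 0 < enorm g by rewrite lt_def gn0 enorm_ge0.
nra.
Qed.

Lemma dot_eq_enorm g u : unit_ball u -> dot g u = enorm g -> 0 < enorm g ->
  dot u u = 1 /\ enorm g *: u = g.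
Proof.
move=> /unit_ballE u1 gu gp; have := dot_ge0 (enorm g *: u - g).
rewrite dot_scale_norm_sub gu => h.
have uu1 : dot u u = 1.
  apply/le_anti; rewrite u1 /=.
  have : 0 <= enorm g ^+ 2 * (dot u u - 1) by rewrite mulrBr mulr1 expr2; lra.
  by rewrite pmulr_rge0 ?exprn_gt0 // subr_ge0.
split=> //; apply/eqP; rewrite -subr_eq0; apply/eqP/dot_eq0.
by rewrite dot_scale_norm_sub gu uu1; ring.
Qed.

End InnerProduct.

(* The
   rows of the inverse of the edge matrix give the gradients of the affine
   functions bary j; they exist as soon as the edge matrix is invertible. *)
Section Barycentric.
Variables (R : realType) (n : nat) (v : 'I_n.+1 -> 'rV[R]_n).

Definition edge_mx : 'M[R]_n := \matrix_(i < n) (v (lift ord0 i) - v ord0).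

Lemma nondeg_simplexP : nondeg_simplex v <-> edge_mx \in unitmx.
Proof. by rewrite unitmxE unitfE. Qed.

Definition grad (j : 'I_n.+1) : 'rV[R]_n :=
  if unlift ord0 j is Some k then \row_l (invmx edge_mx) l k
  else - \sum_k \row_l (invmx edge_mx) l k.

Definition bary (j : 'I_n.+1) (x : 'rV[R]_n) : R :=
  dot (grad j) (x - v ord0) + (j == ord0)%:R.

Lemma grad0 : grad ord0 = - \sum_k \row_l (invmx edge_mx) l k.
Proof. by rewrite /grad unlift_none. Qed.

Lemma gradS k : grad (lift ord0 k) = \row_l (invmx edge_mx) l k.
Proof. by rewrite /grad liftK. Qed.

(* the gradients sum to zero, so the coordinates sum to one everywhere *)
Lemma grad_sum : \sum_j grad j = 0.
Proof. by rewrite big_ord_recl (eq_bigr _ (fun k _ => gradS k)) grad0 addNr. Qed.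

Lemma bary_sum x : \sum_j bary j x = 1.
Proof.
rewrite /bary big_split /= -dot_suml grad_sum dot0l add0r.
by rewrite big_ord_recl eqxx big1 ?addr0.
Qed.

Lemma baryE j x : bary j x = dot (grad j) x + bary j 0.
Proof. by rewrite /bary !dotBr dot0r; ring. Qed.

Lemma bary_line j a b (s : R) :
  bary j (a + s *: (b - a)) = bary j a + s * (bary j b - bary j a).
Proof.
by rewrite (baryE j (a + _)) (baryE j a) (baryE j b) dotDr dotZr dotBr; ring.
Qed.

Lemma bary_comb j (mu : 'I_n.+1 -> R) :
  \sum_i mu i = 1 -> bary j (\sum_i mu i *: v i) = \sum_i mu i * bary j (v i).
Proof.
move=> mu1; rewrite baryE dot_sumr.
have -> : bary j 0 = \sum_i mu i * bary j 0 by rewrite -mulr_suml mu1 mul1r.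
by rewrite -big_split; apply: eq_bigr => i _; rewrite /= dotZr -mulrDr -baryE.
Qed.

Hypothesis edge_unit : edge_mx \in unitmx.

Lemma inv_row_dual i k :
  dot (\row_l (invmx edge_mx) l k) (v (lift ord0 i) - v ord0) = (i == k)%:R.
Proof.
have := congr1 (fun A : 'M[R]_n => A i k) (mulmxV edge_unit); rewrite !mxE => <-.
by apply: eq_bigr => l _; rewrite !mxE mulrC.
Qed.

Lemma bary_vertex i j : bary j (v i) = (i == j)%:R.
Proof.
rewrite /bary; case: (unliftP ord0 i) => [i'|] ->; last first.
  by rewrite subrr dot0r add0r eq_sym.
case: (unliftP ord0 j) => [k|] ->.
  by rewrite gradS inv_row_dual (inj_eq (@lift_inj _ ord0)) addr0.
rewrite grad0 dotNl dot_suml; under eq_bigr do rewrite inv_row_dual.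
rewrite (bigD1 i') //= eqxx big1 ?addr0 ?addNr // => k /negbTE.
by rewrite eq_sym => ->.
Qed.

Lemma bary_decomp x : x = \sum_j bary j x *: v j.
Proof.
have coord k : bary (lift ord0 k) x = ((x - v ord0) *m invmx edge_mx) ord0 k.
  by rewrite /bary gradS addr0 mxE; apply: eq_bigr => l _; rewrite !mxE mulrC.
have edges : x - v ord0 = \sum_k bary (lift ord0 k) x *: (v (lift ord0 k) - v ord0).
  rewrite -[LHS](mulmxKV edge_unit) mulmx_sum_row.
  by apply: eq_bigr => k _; rewrite coord rowK.
have -> : \sum_j bary j x *: v j = v ord0 + \sum_j bary j x *: (v j - v ord0).
  under [in RHS]eq_bigr do rewrite scalerBr.
  by rewrite sumrB -scaler_suml bary_sum scale1r addrC subrK.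
by rewrite big_ord_recl subrr scaler0 add0r -edges addrC subrK.
Qed.

Lemma dot_grad_vertex i j : dot (grad j) (v i) = (i == j)%:R - bary j 0.
Proof. by rewrite -bary_vertex (baryE j (v i)) addrK. Qed.

Lemma simplex_hullP x : simplex_hull v x <-> forall j, 0 <= bary j x.
Proof.
split=> [[mu [mu0 [mu1 ->]]] j|x0].
  by rewrite bary_comb //; under eq_bigr do rewrite bary_vertex; rewrite sum_mul_delta.
by exists (bary^~ x); split=> //; split; [exact: bary_sum | exact: bary_decomp].
Qed.

Lemma vertex_in_hull i : simplex_hull v (v i).
Proof. by apply/simplex_hullP => j; rewrite bary_vertex ler0n. Qed.

Lemma bary_centroid j : bary j (centroid v) = n.+1%:R^-1.
Proof.
rewrite /centroid scaler_sumr bary_comb.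
  by under eq_bigr do rewrite bary_vertex; rewrite (sum_mul_delta (fun=> _)).
by rewrite sumr_const card_ord -(mulr_natr n.+1%:R^-1) mulVf // pnatr_eq0.
Qed.

Lemma homotheticP s x : 0 < s ->
  homothetic s v x <-> forall j, (1 - s) / n.+1%:R <= bary j x.
Proof.
move=> s0; split=> [[y /simplex_hullP y0 <-] j|xb].
  rewrite bary_line bary_centroid mulrBl mulrBr mul1r; set c := n.+1%:R^-1.
  by have := mulr_ge0 (ltW s0) (y0 j); lra.
exists (centroid v + s^-1 *: (x - centroid v)); last first.
  by rewrite [X in s *: X]addrC addKr scalerA mulfV ?gt_eqF // scale1r addrC subrK.
apply/simplex_hullP => j; rewrite bary_line bary_centroid.
have := xb j; rewrite mulrBl mul1r; set c := n.+1%:R^-1 => xbj.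
have : 0 <= s^-1 * (bary j x - c + s * c) by apply: mulr_ge0; [rewrite invr_ge0 ltW | lra].
suff -> : s^-1 * (bary j x - c + s * c) = c + s^-1 * (bary j x - c) by [].
by field; rewrite gt_eqF.
Qed.

Lemma bary_ball_ge j x : unit_ball x -> bary j 0 - enorm (grad j) <= bary j x.
Proof. by move=> /unit_ballN /(dot_le_enorm (grad j)); rewrite dotNr (baryE j x); lra. Qed.

Lemma bary_ball_min j :
  exists2 x, unit_ball x & bary j x = bary j 0 - enorm (grad j).
Proof.
set N := enorm (grad j).
have NN : N^-1 * N ^+ 2 = N.
  by have [->|Nn0] := eqVneq N 0; rewrite ?invr0 ?mul0r // expr2 mulrA mulVf ?mul1r.
exists (- (N^-1 *: grad j)).
  apply/unit_ballE; rewrite dotNl dotNr opprK dotZl dotZr -enorm2 -/N NN.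
  by have [->|Nn0] := eqVneq N 0; rewrite ?invr0 ?mul0r ?ler01 ?mulVf.
by rewrite baryE dotNr dotZr -enorm2 -/N NN addrC.
Qed.

(* ball_ratio j is the least sigma for which B_n fits the j-th facet
   constraint of sigma S. *)
Definition ball_ratio j : R := 1 + n.+1%:R * (enorm (grad j) - bary j 0).

Lemma ball_sub_homotheticP (s : R) : 0 < s ->
  @unit_ball R n `<=` homothetic s v <-> forall j, ball_ratio j <= s.
Proof.
move=> s0; have n0 : 0 < n.+1%:R :> R by rewrite ltr0n.
have ratioE j : (ball_ratio j <= s) = ((1 - s) / n.+1%:R <= bary j 0 - enorm (grad j)).
  by rewrite ler_pdivrMr // /ball_ratio; apply/idP/idP; nra.
split=> [sub j|ratio x xB].
  rewrite ratioE; have [x xB <-] := bary_ball_min j.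
  exact: (homotheticP _ s0).1 (sub x xB) j.
by apply/homotheticP => // j; apply: le_trans (bary_ball_ge j xB); rewrite -ratioE.
Qed.

End Barycentric.

Section XiBounds.
Variables (R : realType) (n : nat) (v : 'I_n.+1 -> 'rV[R]_n).
Hypothesis edge_unit : edge_mx v \in unitmx.

Lemma xi_admissible_exists :
  [set s : R | 1 <= s /\ @unit_ball R n `<=` homothetic s v] !=set0.
Proof.
set s := 1 + \sum_j `|ball_ratio v j|.
have s1 : 1 <= s by rewrite lerDl sumr_ge0.
exists s; split=> //; apply/(ball_sub_homotheticP edge_unit (lt_le_trans ltr01 s1)) => j.
apply: le_trans (ler_norm _) _; rewrite /s (bigD1 j) //= addrCA lerDl.
by rewrite addr_ge0 ?sumr_ge0.
Qed.

Lemma xi_le (s : R) : 1 <= s -> (forall j, ball_ratio v j <= s) -> xi v <= s.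
Proof.
move=> s1 ratio; apply: ge_inf; first by exists 1 => t [].
by split=> //; apply/(ball_sub_homotheticP edge_unit (lt_le_trans ltr01 s1)).
Qed.

Lemma ball_ratio_le_xi j : ball_ratio v j <= xi v.
Proof.
apply: lb_le_inf; first exact: xi_admissible_exists.
by move=> s [s1 /(ball_sub_homotheticP edge_unit (lt_le_trans ltr01 s1))].
Qed.

Lemma sum_ball_ratio : \sum_j ball_ratio v j = n.+1%:R * \sum_j enorm (grad v j).
Proof.
rewrite big_split /= -mulr_sumr sumrB bary_sum sumr_const card_ord.
by rewrite -(mulr_natl 1) mulr1 mulrBr mulr1 addrC subrK.
Qed.

Lemma sum_grad_le_xi : \sum_j enorm (grad v j) <= xi v.
Proof.
have : \sum_j ball_ratio v j <= \sum_(j < n.+1) xi v.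
  by apply: ler_sum => j _; exact: ball_ratio_le_xi.
by rewrite sum_ball_ratio sumr_const card_ord -(mulr_natl (xi v)) ler_pM2l ?ltr0n.
Qed.

End XiBounds.

Section SimplexInBall.
Variables (R : realType) (n : nat) (v : 'I_n.+1 -> 'rV[R]_n).
Hypotheses (edge_unit : edge_mx v \in unitmx)
           (hull_in_ball : simplex_hull v `<=` @unit_ball R n).

Lemma grad_norm_ge j : 1 - bary v j 0 <= enorm (grad v j).
Proof.
have := dot_le_enorm (grad v j) (hull_in_ball (vertex_in_hull edge_unit j)).
by rewrite dot_grad_vertex // eqxx.
Qed.

Lemma n_le_sum_grad : n%:R <= \sum_j enorm (grad v j).
Proof.
apply: le_trans (ler_sum _ (fun j _ => grad_norm_ge j)).
by rewrite sumrB bary_sum sumr_const card_ord mulrSr addrK.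
Qed.

Lemma n_le_xi : n%:R <= xi v.
Proof. exact: le_trans n_le_sum_grad (sum_grad_le_xi edge_unit). Qed.

Hypothesis xi_eq_n : xi v = n%:R.

Lemma xi_eq_n_facets j :
  n.+1%:R * bary v j 0 = 1 /\ n.+1%:R * enorm (grad v j) = n%:R.
Proof.
have N1 : n.+1%:R = n%:R + 1 :> R by rewrite natr1.
have facet i : 1 + n.+1%:R * (enorm (grad v i) - bary v i 0) <= n%:R /\
               n.+1%:R * (1 - bary v i 0) <= n.+1%:R * enorm (grad v i).
  split; first by rewrite -xi_eq_n; exact: ball_ratio_le_xi.
  by rewrite ler_wpM2l ?ler0n ?grad_norm_ge.
have b1 i : n.+1%:R * bary v i 0 = 1.
  apply/esym; move: i; apply: (@ler_sum_eq _ _ (fun=> 1)).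
    by move=> i; have [] := facet i; rewrite !mulrBr mulr1; lra.
  by rewrite -mulr_sumr bary_sum mulr1 sumr_const card_ord.
split=> //; have [] := facet j; have := b1 j; rewrite !mulrBr mulr1; lra.
Qed.

Hypothesis n_gt0 : (0 < n)%N.

(* equality in Cauchy-Schwarz: each vertex is a unit vector and its gradient
   is n/(n+1) times it *)
Lemma xi_eq_n_vertex j :
  dot (v j) (v j) = 1 /\ (n%:R / n.+1%:R) *: v j = grad v j.
Proof.
have [b1 g1] := xi_eq_n_facets j.
have N0 : n.+1%:R != 0 :> R by rewrite pnatr_eq0.
have gE : enorm (grad v j) = n%:R / n.+1%:R.
  by apply: (mulfI N0); rewrite g1 mulrCA mulfV // mulr1.
rewrite -gE; apply: dot_eq_enorm.
- exact/hull_in_ball/vertex_in_hull.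
- rewrite dot_grad_vertex // eqxx gE; apply: (mulfI N0).
  by rewrite mulrCA mulfV // mulr1 mulrBr b1 mulr1 -natr1 addrK.
- by rewrite gE divr_gt0 ?ltr0n.
Qed.

Lemma xi_eq_n_gram i j : i != j -> n%:R * dot (v i) (v j) = -1.
Proof.
move=> ij; have := dot_grad_vertex edge_unit i j.
rewrite -(xi_eq_n_vertex j).2 dotZl dotC (negbTE ij) sub0r => nd.
have [b1 _] := xi_eq_n_facets j.
have N0 : n.+1%:R != 0 :> R by rewrite pnatr_eq0.
suff -> : n%:R * dot (v i) (v j) = n.+1%:R * (n%:R / n.+1%:R * dot (v i) (v j)).
  by rewrite nd mulrN b1.
by rewrite mulrA mulrCA mulfV // mulr1.
Qed.

Lemma xi_eq_n_regular : regular_simplex v /\ inscribed v.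
Proof.
have n0 : n%:R != 0 :> R by rewrite pnatr_eq0 -lt0n.
have edge2 i j : i != j -> n%:R * dot (v i - v j) (v i - v j) = 2 * n%:R + 2.
  move=> ij; rewrite !(dotBl, dotBr) (xi_eq_n_vertex i).1 (xi_eq_n_vertex j).1.
  by rewrite (dotC (v j)) !mulrBr !mulr1 (xi_eq_n_gram ij); lra.
split=> [i j k l ij kl|j]; last by rewrite enormE (xi_eq_n_vertex j).1 sqrtr1.
by rewrite !enormE; congr Num.sqrt; apply: (mulfI n0); rewrite !edge2.
Qed.

End SimplexInBall.

Lemma hull_in_ball_of_vertices (R : realType) (n : nat) (v : 'I_n.+1 -> 'rV[R]_n) :
  (forall i, unit_ball (v i)) -> simplex_hull v `<=` @unit_ball R n.
Proof.
move=> vB x [mu [mu0 [mu1 ->]]]; apply/unit_ballE; rewrite dot_suml.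
have -> : 1 = \sum_i \sum_j mu i * mu j.
  rewrite -[1]mul1r -{1}mu1 mulr_suml.
  by apply: eq_bigr => i _; rewrite -mulr_sumr mu1 mulr1.
apply: ler_sum => i _; rewrite dotZl dot_sumr mulr_sumr; apply: ler_sum => j _.
rewrite dotZr mulrA -[X in _ <= X]mulr1 ler_wpM2l ?mulr_ge0 //.
exact: le_trans (dot_le_enorm _ (vB j)) (vB i).
Qed.

Section RegularInscribed.
Variables (R : realType) (n : nat) (v : 'I_n.+1 -> 'rV[R]_n).
Hypotheses (n_gt0 : (0 < n)%N) (edge_unit : edge_mx v \in unitmx).
Hypotheses (reg : regular_simplex v) (ins : inscribed v).

Lemma inscribed_dot i : dot (v i) (v i) = 1.
Proof. by rewrite -enorm2 ins expr1n. Qed.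

Lemma regular_dot_const : exists t, forall i j, i != j -> dot (v i) (v j) = t.
Proof.
have i0 : ord_max != ord0 :> 'I_n.+1 by rewrite -val_eqE /= -lt0n.
exists (dot (v ord_max) (v ord0)) => i j ij.
have := congr1 (fun r => r ^+ 2) (reg ij i0).
by rewrite !enorm2 !(dotBl, dotBr) !inscribed_dot (dotC (v j)) (dotC (v ord0)); lra.
Qed.

Lemma dot_vertex_bary t : (forall i j, i != j -> dot (v i) (v j) = t) ->
  forall y i, dot y (v i) = bary v i y * (1 - t) + t.
Proof.
move=> tE y i; rewrite {1}(bary_decomp edge_unit y) dot_suml (bigD1 i) //=.
rewrite dotZl inscribed_dot (eq_bigr (fun j => bary v j y * t)); last first.
  by move=> j ji; rewrite dotZl tE.
have := bary_sum v y; rewrite (bigD1 i) //= -mulr_suml => sum1.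
have -> : \sum_(j < n.+1 | j != i) bary v j y = 1 - bary v i y.
  by rewrite -sum1 addrAC subrr add0r.
by ring.
Qed.

Lemma regular_bary y i : n.+1%:R * bary v i y = n%:R * dot y (v i) + 1.
Proof.
have [t tE] := regular_dot_const; have dv := dot_vertex_bary tE.
have nt : n%:R * t = -1.
  have : \sum_i (bary v i 0 * (1 - t) + t) = 0.
    by rewrite big1 // => k _; rewrite -dv dot0l.
  by rewrite big_split /= -mulr_suml bary_sum sumr_const card_ord mulrSr -(mulr_natl t); lra.
rewrite dv -natr1; have := congr1 ( *%R (bary v i y)) nt; nra.
Qed.

Lemma regular_xi : xi v = n%:R.
Proof.
have n0 : 0 < n%:R :> R by rewrite ltr0n.
have hB : simplex_hull v `<=` @unit_ball R n.
  by apply: hull_in_ball_of_vertices => i; rewrite /unit_ball /= ins.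
apply/le_anti; rewrite (n_le_xi edge_unit hB) andbT.
apply: xi_le => //; first by rewrite ler1n.
apply/(ball_sub_homotheticP edge_unit n0) => x xB.
apply/(homotheticP edge_unit _ n0) => i.
rewrite ler_pdivrMr ?ltr0n // mulrC regular_bary.
have := dot_le_enorm (- v i) xB; rewrite enormN ins dotNl dotC; nra.
Qed.

End RegularInscribed.

Section RegularExample.
Variables (R : realType) (n : nat).
Hypothesis n_gt0 : (0 < n)%N.

Let r : R := (Num.sqrt n%:R)^-1.
Let a : R := Num.sqrt ((n%:R + 1) / n%:R).
Let b : R := (r - a) / n%:R.

Definition reg_vertex (j : 'I_n.+1) : 'rV[R]_n :=
  if unlift ord0 j is Some k then \row_l (a * (l == k)%:R + b) else \row_l (- r).

Lemma reg_vertex0 : reg_vertex ord0 = \row_l (- r).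
Proof. by rewrite /reg_vertex unlift_none. Qed.

Lemma reg_vertexS k : reg_vertex (lift ord0 k) = \row_l (a * (l == k)%:R + b).
Proof. by rewrite /reg_vertex liftK. Qed.

Let n0 : n%:R != 0 :> R. Proof. by rewrite pnatr_eq0 -lt0n. Qed.
Let r2 : r ^+ 2 = n%:R^-1.
Proof. by rewrite exprVn sqr_sqrtr // ler0n. Qed.
Let a2 : a ^+ 2 = (n%:R + 1) / n%:R.
Proof. by rewrite sqr_sqrtr // divr_ge0 // ?addr_ge0 // ler0n. Qed.

Lemma reg_vertex_gram i j :
  dot (reg_vertex i) (reg_vertex j) = if i == j then 1 else - n%:R^-1.
Proof.
have row_sum (k : 'I_n) : \sum_l (a * (l == k)%:R + b) = a + n%:R * b.
  by rewrite big_split /= (sum_mul_delta (fun=> a)) sumr_const card_ord -(mulr_natl b).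
have cross : - r * (a + n%:R * b) = - n%:R^-1 by rewrite -r2 /b; field.
have diag d : a * a * d + a * b + b * a + n%:R * b * b =
              a ^+ 2 * d + (r ^+ 2 - a ^+ 2) / n%:R by rewrite /b; field.
rewrite /dot; case: (unliftP ord0 i) => [k|] ->; case: (unliftP ord0 j) => [k'|] ->.
- rewrite !reg_vertexS; under eq_bigr do rewrite !mxE.
  rewrite sum_delta_affine diag (inj_eq (@lift_inj _ ord0)) r2 a2.
  by case: eqP => _ /=; field.
- rewrite reg_vertexS reg_vertex0 eq_sym (negbTE (neq_lift _ _)).
  by under eq_bigr do rewrite !mxE mulrC; rewrite -mulr_sumr row_sum.
- rewrite reg_vertexS reg_vertex0 (negbTE (neq_lift _ _)).
  by under eq_bigr do rewrite !mxE; rewrite -mulr_sumr row_sum.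
- rewrite reg_vertex0 eqxx; under eq_bigr do rewrite !mxE.
  by rewrite sumr_const card_ord -(mulr_natl (- r * - r)) mulrNN -expr2 r2 mulfV.
Qed.

Lemma reg_vertex_inscribed : inscribed reg_vertex.
Proof. by move=> i; rewrite enormE reg_vertex_gram eqxx sqrtr1. Qed.

Lemma reg_vertex_regular : regular_simplex reg_vertex.
Proof.
move=> i j k l ij kl; rewrite !enormE; congr Num.sqrt.
by rewrite !(dotBl, dotBr) !reg_vertex_gram !eqxx !(negbTE ij, negbTE kl)
  !(eq_sym j, eq_sym l) !(negbTE ij, negbTE kl).
Qed.

Lemma reg_vertex_hull : simplex_hull reg_vertex `<=` @unit_ball R n.
Proof.
by apply: hull_in_ball_of_vertices => i; rewrite /unit_ball /= reg_vertex_inscribed.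
Qed.

(* the edge matrix is a I + e J (J the all-ones matrix), whose inverse is
   a^-1 I + q J *)
Lemma reg_vertex_nondeg : nondeg_simplex reg_vertex.
Proof.
set e := b + r.
have a0 : 0 < a by rewrite sqrtr_gt0 divr_gt0 ?ltr0n // ltr_wpDl ?ler0n.
have r0 : 0 < r by rewrite invr_gt0 sqrtr_gt0 ltr0n.
have ane : a + n%:R * e = r * (n%:R + 1) by rewrite /e /b; field.
have ane0 : a + n%:R * e != 0 by rewrite ane mulf_neq0 ?gt_eqF // ltr_wpDl ?ler0n.
have edgeE : edge_mx reg_vertex = \matrix_(k, l) (a * (k == l)%:R + e).
  by apply/matrixP => k l; rewrite !mxE reg_vertexS reg_vertex0 !mxE /e (eq_sym l); ring.
set q := - e / (a * (a + n%:R * e)).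
have inv : \matrix_(k, l) (a^-1 * (k == l)%:R + q) *m edge_mx reg_vertex = 1%:M.
  apply/matrixP => i j; rewrite edgeE !mxE; under eq_bigr do rewrite !mxE (eq_sym i).
  rewrite sum_delta_affine /q.
  by case: eqP => _ /=; field; rewrite ane0 gt_eqF.
by apply/nondeg_simplexP; have [] := mulmx1_unit inv.
Qed.

End RegularExample.

Lemma inf_attained (R : realType) (E : set R) a :
  E a -> (forall y, E y -> a <= y) -> inf E = a.
Proof.
move=> Ea a_lb; apply/le_anti; rewrite lb_le_inf ?andbT //; last by exists a.
by apply: ge_inf => //; exists a.
Qed.

Theorem theorem10p4 (R : realType) (n : nat) (hn : (0 < n)%N) :
  (forall v : 'I_n.+1 -> 'rV[R]_n,
     nondeg_simplex v -> simplex_hull v `<=` @unit_ball R n ->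
     n%:R <= xi v /\ (xi v = n%:R <-> regular_simplex v /\ inscribed v))
  /\ @xi_n R n = n%:R.
Proof.
have xi_bounds (v : 'I_n.+1 -> 'rV[R]_n) : nondeg_simplex v ->
    simplex_hull v `<=` @unit_ball R n ->
    n%:R <= xi v /\ (xi v = n%:R <-> regular_simplex v /\ inscribed v).
  move=> /nondeg_simplexP vU vB; split; first exact: n_le_xi vU vB.
  split=> [xin|[reg ins]]; first exact: xi_eq_n_regular vU vB xin hn.
  exact: regular_xi hn vU reg ins.
split=> //; apply: inf_attained.
  exists (@reg_vertex R n); first by split; [exact: reg_vertex_nondeg | exact: reg_vertex_hull].
  apply: (regular_xi hn _ (@reg_vertex_regular R n hn) (@reg_vertex_inscribed R n hn)).
  exact: (nondeg_simplexP _).1 (reg_vertex_nondeg R hn).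
by move=> _ [v [vS vB] <-]; have [] := xi_bounds v vS vB.
Qed.
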